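(* Let $G$ be a finite group, $H\subseteq G$ a subgroup, $U=\mathrm{Ind}_H^G$ and $D=\mathrm{Res}^G_H$, and consider the operator $UD$ on $\mathrm{Cl}_{\mathbb{Z}}(G)$, represented as a matrix in the basis $\mathrm{Irr}(G)$. Let $k$ be an integer and define the class function $\phi$ on $G$ by $\phi(g)=\mathrm{Ind}_H^G(\mathbf{1}_H)(g)+k$. (ii) If $\phi$ is nonvanishing (equivalently $A:=UD+kI$ is nonsingular), then for all $\chi,\psi\in\mathrm{Irr}(G)$ the $(\chi,\psi)$-entry of the matrix of $A^{-1}$ is $A^{-1}_{\chi,\psi}=\langle \chi,\psi/\phi\rangle_G$ (and this also equals $\langle \chi\overline{\psi},1/\phi\rangle_G=\langle\chi/\phi,\psi\rangle_G=A^{-1}_{\psi,\chi}$). (iii) Let $s$ be the last diagonal entry of the Smith normal form over $\mathbb{Z}$ of $UD+kI$. Then $s=0$ when $UD+kI$ is singular, and when $UD+kI$ is nonsingular, $s$ (up to sign) is the smallest positive integer $s$ such that the class function $s\cdot\frac{1}{\phi}$ lies in $\mathrm{Cl}_{\mathbb{Z}}(G)$.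
   Context: $\mathrm{Cl}_{\mathbb{Z}}(G)$ denotes the $\mathbb{Z}$-module of virtual characters of $G$, i.e. class functions that are $\mathbb{Z}$-linear combinations of the complex irreducible characters $\mathrm{Irr}(G)$. $\mathbf{1}_H$ is the trivial character of $H$. The inner product of class functions is $\langle\alpha,\beta\rangle_G=\frac{1}{|G|}\sum_{g\in G}\alpha(g)\overline{\beta(g)}$. The Smith normal form over $\mathbb{Z}$ of an integer matrix $B$ is the diagonal matrix $PBQ$ ($P,Q$ unimodular) with diagonal entries $s_1\mid s_2\mid\cdots$. *)

From HB Require Import structures.
From mathcomp Require Import all_boot all_order all_algebra all_fingroup all_solvable all_field all_character.
Set Implicit Arguments. Unset Strict Implicit. Unset Printing Implicit Defensive.
Import Order.TTheory GRing.Theory Num.Theory.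
Local Open Scope ring_scope.

(* Matrix of the operator UD = Ind_H^G o Res^G_H on Cl_Z(G) in the basis Irr(G):
   the (chi_i, chi_j) entry is the coefficient of chi_i in UD(chi_j),
   i.e. '[Ind (Res chi_j), chi_i]. *)
Definition UDmx (gT : finGroupType) (G H : {group gT}) : 'M[algC]_(Nirr G) :=
  \matrix_(i, j) '[ 'Ind[G, H] ('Res[H, G] 'chi[G]_j), 'chi[G]_i ].

Definition UDkmx (gT : finGroupType) (G H : {group gT}) (k : int) :
  'M[algC]_(Nirr G) := UDmx G H + (k%:~R)%:M.

Definition phiUD (gT : finGroupType) (G H : {group gT}) (k : int) : 'CF(G) :=
  'Ind[G, H] 1 + (k%:~R : algC)%:A.

Definition in_ClZ (gT : finGroupType) (G : {group gT}) (f : 'CF(G)) : Prop :=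
  exists z : Iirr G -> int, f = \sum_i 'chi[G]_i *~ z i.

Definition Smith_form n (B D : 'M[int]_n) : Prop :=
  exists P Q : 'M[int]_n,
    [/\ P \in unitmx, Q \in unitmx, D = P *m B *m Q, is_diag_mx D &
        forall i j : 'I_n, (i <= j)%N -> (D i i %| D j j)%Z].

From HB Require Import structures.
From mathcomp Require Import all_boot all_order all_algebra all_fingroup all_solvable all_field all_character.
Import Order.TTheory GRing.Theory Num.Theory.
Local Open Scope ring_scope.

(* Let M(f) be the matrix, in the basis Irr(G), of multiplication by the class
   function f; then M(f g) = M(f) M(g) and M(1) = I.  Frobenius reciprocity,
   Ind (Res chi) = chi * Ind 1_H, gives UD + kI = M(phi), so A is invertible
   exactly when phi is a unit of the ring of class functions (i.e. nonvanishing),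
   and then A^-1 = M(1/phi).  Since phi is a real-valued virtual character, A is
   symmetric and the real factor 1/phi moves freely across inner products.
   The first column of M(f) is the coordinate vector of f, so M(f) is integral
   iff f is a virtual character: s/phi lies in Cl_Z(G) iff B X = s I has an
   integral solution, which by the Smith form happens iff the last invariant
   factor divides s. *)


Section IntegralMatrices.

Variables (R : archiNumDomainType) (m n : nat).

Lemma map_mx_intr_inj :
  injective (map_mx intr : 'M[int]_(m, n) -> 'M[R]_(m, n)).
Proof.
move=> M N /matrixP eMN; apply/matrixP => i j.
by have := eMN i j; rewrite !mxE => /intr_inj.
Qed.

Lemma mxOver_intP (M : 'M[R]_(m, n)) :
  reflect (exists W : 'M[int]_(m, n), M = map_mx intr W) (M \is a mxOver Num.int).
Proof.
apply: (iffP mxOverP) => [M_int | [W ->] i j]; last by rewrite mxE intr_int.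
by exists (map_mx Num.floor M); apply/matrixP => i j; rewrite !mxE floorK.
Qed.

End IntegralMatrices.

Section SmithFormLastInvariant.

Context {n : nat} {B D : 'M[int]_n} {i : 'I_n}.
Hypothesis BD_Smith : Smith_form B D.
Hypothesis D_last : forall l, (D l l %| D i i)%Z.

Lemma Smith_form_scalar_solvableP (m : int) :
  (exists W, B *m W = m%:M) <-> (D i i %| m)%Z.
Proof.
have [P [Q [uP uQ eD /diag_mxP[d eDd] _]]] := BD_Smith.
have Dd l : D l l = d 0 l by rewrite eDd mxE eqxx.
split=> [[W eW] | dvm].
  have eDW : D *m (invmx Q *m W *m invmx P) = m%:M.
    rewrite eD -!mulmxA (mulmxA Q) mulmxV // mul1mx (mulmxA B) eW.
    by rewrite -scalar_mxC mulmxA mulmxV // mul1mx.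
  move/matrixP/(_ i i): eDW.
  rewrite {1}eDd mul_diag_mx !mxE eqxx mulr1n -Dd => <-.
  exact/dvdz_mulr/dvdzz.
pose E : 'M[int]_n := diag_mx (\row_l (m %/ D l l)%Z).
have eDE : D *m E = m%:M.
  rewrite {1}eDd mulmx_diag -diag_const_mx; congr diag_mx.
  by apply/rowP => l; rewrite !mxE -Dd mulrC divzK // (dvdz_trans (D_last l)).
exists (Q *m E *m P); apply: (can_inj (mulKmx uP)).
by rewrite !mulmxA -eD eDE scalar_mxC.
Qed.

Lemma Smith_form_last_eq0 : (D i i == 0) = (\det B == 0).
Proof.
have [P [Q [uP uQ eD dD _]]] := BD_Smith.
have det_unit (M : 'M[int]_n) : M \in unitmx -> \det M != 0.
  by apply: contraTneq => dM0; rewrite unitmxE dM0 unitr0.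
have detD : \det D = \prod_l D l l by rewrite det_trig // is_diag_mx_is_trig.
have {eD}-> : \det B == 0 = (\det D == 0).
  rewrite eD !det_mulmx !mulf_eq0.
  by rewrite (negPf (det_unit _ uP)) (negPf (det_unit _ uQ)) orbF.
rewrite detD prodf_seq_eq0; apply/idP/hasP => [Di0 | [l _ /eqP Dl0]].
  by exists i; rewrite ?mem_index_enum.
by move: (D_last l); rewrite Dl0 dvd0z.
Qed.

End SmithFormLastInvariant.

Section MultiplicationMatrix.

Context {gT : finGroupType} {G : {group gT}}.
Implicit Types (f h : 'CF(G)).

Definition cfmx (f : 'CF(G)) : 'M[algC]_(Nirr G) :=
  \matrix_(i, j) '[ 'chi[G]_j * f, 'chi[G]_i ].

Lemma cfmxE f i j : cfmx f i j = '[ 'chi[G]_j * f, 'chi[G]_i ].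
Proof. by rewrite mxE. Qed.

Lemma cfmx_col0 f i : cfmx f i 0 = '[f, 'chi[G]_i].
Proof. by rewrite cfmxE irr0 mul1r. Qed.

Lemma cfmx1 : cfmx 1 = 1%:M.
Proof. by apply/matrixP => i j; rewrite cfmxE mulr1 cfdot_irr mxE eq_sym. Qed.

Lemma cfmxZ a f : cfmx (a *: f) = a *: cfmx f.
Proof. by apply/matrixP => i j; rewrite !(mxE, cfmxE) -scalerAr cfdotZl. Qed.

Lemma cfmxM f h : cfmx f *m cfmx h = cfmx (f * h).
Proof.
apply/matrixP => i j; rewrite !mxE [f * h]mulrC mulrA.
rewrite [in RHS](cfun_sum_cfdot ('chi_j * h)) mulr_suml cfdot_suml.
by apply: eq_bigr => l _; rewrite cfmxE -scalerAl cfdotZl mulrC cfmxE.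
Qed.

Lemma cfunit_nonvanishing f :
  (forall g, g \in G -> f g != 0) <-> f \is a GRing.unit.
Proof.
rewrite qualifE /GRing.unit /= genGid.
by split=> [/forall_inP | /forall_inP].
Qed.

Lemma cfmx_unit f : (cfmx f \in unitmx) = (f \is a GRing.unit).
Proof.
apply/idP/idP => [Uf | Uf]; last first.
  have f_finv : cfmx f *m cfmx f^-1 = 1%:M by rewrite cfmxM mulrV ?cfmx1.
  by case: (mulmx1_unit f_finv).
pose psi := \sum_l invmx (cfmx f) l 0 *: 'chi[G]_l.
suff psi_f : psi * f = 1 by apply/unitrP; exists psi; rewrite [f * _]mulrC psi_f.
rewrite (cfun_sum_cfdot (psi * f)) [RHS](cfun_sum_cfdot 1).
apply: eq_bigr => i _; congr (_ *: _).
rewrite -[in RHS]cfmx_col0 cfmx1 -(mulmxV Uf) mxE.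
rewrite mulr_suml cfdot_suml; apply: eq_bigr => l _.
by rewrite cfmxE -scalerAl cfdotZl mulrC.
Qed.

Lemma invmx_cfmx f : f \is a GRing.unit -> invmx (cfmx f) = cfmx f^-1.
Proof.
move=> Uf; have Uf_mx : cfmx f \in unitmx by rewrite cfmx_unit.
by apply: (can_inj (mulKmx Uf_mx)); rewrite mulmxV // cfmxM mulrV ?cfmx1.
Qed.

Lemma cfmx_int f : (cfmx f \is a mxOver Num.int) = (f \in 'Z[irr G]%g).
Proof.
apply/mxOverP/idP => [f_int | Zf i j]; last first.
  by rewrite cfmxE Cint_cfdot_vchar_irr // rpredM ?irr_vchar.
rewrite [f]cfun_sum_cfdot rpred_sum // => i _.
by rewrite scale_zchar ?irr_vchar // -cfmx_col0.
Qed.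

Lemma cfmx_scalar_solvableP {B : 'M[int]_(Nirr G)} {f} (m : int) :
    map_mx intr B = cfmx f -> f \is a GRing.unit ->
  (exists W, B *m W = m%:M) <-> m%:~R *: f^-1 \in 'Z[irr G]%g.
Proof.
move=> eB Uf; have Uf_mx : cfmx f \in unitmx by rewrite cfmx_unit.
have cfmx_inv : cfmx f *m cfmx (m%:~R *: f^-1) = (m%:~R)%:M.
  by rewrite cfmxZ -scalemxAr cfmxM mulrV // cfmx1 scalemx1.
have solE W : B *m W = m%:M <-> map_mx intr W = cfmx (m%:~R *: f^-1).
  split=> eW; last first.
    by apply: (@map_mx_intr_inj algC); rewrite map_mxM eB eW cfmx_inv map_scalar_mx.
  by apply: (can_inj (mulKmx Uf_mx)); rewrite cfmx_inv -eB -map_mxM eW map_scalar_mx.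
rewrite -cfmx_int; split=> [[W /solE eW] | /mxOver_intP[W /esym/solE]].
  by apply/mxOver_intP; exists W.
by exists W.
Qed.

Section RealValued.

Context {f : 'CF(G)}.
Hypothesis f_real : (f^*)%CF = f.

Let f_realE x : (f x)^* = f x.
Proof. by rewrite -cfConjCE f_real. Qed.

Lemma cfdotMr_real a b : '[a * f, b] = '[a, b * f].
Proof.
rewrite !cfdotE; congr (_ * _); apply: eq_bigr => x _.
by rewrite !cfunE rmorphM /= f_realE mulrA mulrAC.
Qed.

Lemma cfdotM_conj_real a b : '[a * f, b] = '[a * (b^*)%CF, f].
Proof.
rewrite !cfdotE; congr (_ * _); apply: eq_bigr => x _.
by rewrite !cfunE f_realE mulrAC.
Qed.

Lemma cfConjC_real_inv : ((f^-1)^*)%CF = f^-1.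
Proof.
have [Uf | nUf] := boolP (f \is a GRing.unit); last by rewrite invr_out.
by rewrite rmorphV //= f_real.
Qed.

Lemma cfmx_sym : f \in 'Z[irr G]%g -> (cfmx f)^T = cfmx f.
Proof.
move=> Zf; apply/matrixP => i j; rewrite mxE !cfmxE cfdotMr_real cfdotC.
by rewrite conj_intr // Cint_cfdot_vchar_irr // rpredM ?irr_vchar.
Qed.

End RealValued.

End MultiplicationMatrix.

Lemma in_ClZ_vchar {gT : finGroupType} {G : {group gT}} (f : 'CF(G)) :
  in_ClZ f <-> f \in 'Z[irr G]%g.
Proof.
split=> [[z ->] | Zf].
  by rewrite rpred_sum // => i _; rewrite rpredMz ?irr_vchar.
exists (fun i => Num.floor '[f, 'chi_i]); rewrite {1}[f]cfun_sum_cfdot.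
by apply: eq_bigr => i _; rewrite -scaler_int floorK ?Cint_cfdot_vchar_irr.
Qed.

Section InductionRestriction.

Context {gT : finGroupType} {G H : {group gT}}.
Variable k : int.
Hypothesis sHG : H \subset G.

Lemma UDkmx_cfmx : UDkmx G H k = cfmx (phiUD G H k).
Proof.
apply/matrixP => i j; rewrite !mxE /phiUD mulrDr cfdotDl.
rewrite mulr_algr cfdotZl cfdot_irr eq_sym mulr_natr; congr (_ + _).
by rewrite -['Res _]mul1r cfIndM // mulrC.
Qed.

Lemma phiUD_vchar : phiUD G H k \in 'Z[irr G]%g.
Proof.
apply: rpredD; first by rewrite char_vchar ?cfInd_char ?cfun1_char.
by rewrite scale_zchar ?intr_int ?cfun1_vchar.
Qed.

Lemma phiUD_real : ((phiUD G H k)^*)%CF = phiUD G H k.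
Proof.
rewrite /phiUD rmorphD /= cfAutInd cfAut_cfun1 cfAutZ_Cint ?rpred_int //.
by rewrite cfAut_cfun1.
Qed.

End InductionRestriction.

Theorem proposition6p9 (gT : finGroupType) (G H : {group gT}) (k : int) :
  H \subset G ->
  ((forall g, g \in G -> phiUD G H k g != 0) <-> UDkmx G H k \in unitmx) /\
  ((forall g, g \in G -> phiUD G H k g != 0) ->
    forall i j : Iirr G,
      [/\ invmx (UDkmx G H k) i j = '[ 'chi[G]_i, 'chi[G]_j * (phiUD G H k)^-1 ],
          invmx (UDkmx G H k) i j
            = '[ 'chi[G]_i * ('chi[G]_j)^*%CF, (phiUD G H k)^-1 ],
          invmx (UDkmx G H k) i j = '[ 'chi[G]_i * (phiUD G H k)^-1, 'chi[G]_j ] &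
          invmx (UDkmx G H k) i j = invmx (UDkmx G H k) j i]) /\
  (forall B D : 'M[int]_(Nirr G),
     map_mx intr B = UDkmx G H k -> Smith_form B D ->
     forall i : Iirr G, (i.+1 = Nirr G)%N ->
       (UDkmx G H k \notin unitmx -> D i i = 0) /\
       (UDkmx G H k \in unitmx ->
          (0 < `|D i i|)%N /\
          in_ClZ (`|D i i|%:R *: (phiUD G H k)^-1) /\
          forall m : nat, (0 < m < `|D i i|)%N ->
            ~ in_ClZ (m%:R *: (phiUD G H k)^-1))).
Proof.
move=> sHG; rewrite UDkmx_cfmx //; set phi := phiUD G H k.
have unit_phi : (forall g, g \in G -> phi g != 0) <-> cfmx phi \in unitmx.
  by rewrite cfmx_unit; apply: cfunit_nonvanishing.
split=> //; split=> [/cfunit_nonvanishing Uphi i j | B D eB BD_Smith i i_last].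
  have inv_sym : (invmx (cfmx phi))^T = invmx (cfmx phi).
    by rewrite trmx_inv (cfmx_sym (phiUD_real k) (phiUD_vchar k)).
  have invE : invmx (cfmx phi) i j = '[ 'chi_i * phi^-1, 'chi_j ].
    by rewrite -inv_sym mxE invmx_cfmx // cfmxE.
  have phiV_real : ((phi^-1)^*)%CF = phi^-1 := cfConjC_real_inv (phiUD_real k).
  have inv_symE : invmx (cfmx phi) j i = invmx (cfmx phi) i j.
    by rewrite -{1}inv_sym mxE.
  by rewrite inv_symE -(cfdotMr_real phiV_real) -cfdotM_conj_real // -invE.
have D_last l : (D l l %| D i i)%Z.
  by case: BD_Smith => P [Q [_ _ _ _]]; apply; rewrite -ltnS i_last.
have unit_det : (cfmx phi \in unitmx) = (\det B != 0).
  by rewrite -eB unitmxE unitfE det_map_mx intr_eq0.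
split=> [| /[dup] Uphi_mx]; rewrite unit_det.
  by rewrite negbK -(Smith_form_last_eq0 BD_Smith D_last) => /eqP.
rewrite -(Smith_form_last_eq0 BD_Smith D_last) -absz_gt0 => Dii_gt0.
have Uphi : phi \is a GRing.unit by rewrite -cfmx_unit.
have ClZ_dvd (m : nat) : in_ClZ (m%:R *: phi^-1) <-> (D i i %| m%:Z)%Z.
  apply: (iff_trans (in_ClZ_vchar _)).
  apply: (iff_trans (iff_sym (cfmx_scalar_solvableP m eB Uphi))).
  exact: Smith_form_scalar_solvableP.
split=> //; split=> [| m /andP[m_gt0 m_lt] /ClZ_dvd].
  by apply/ClZ_dvd; rewrite dvdzE /= dvdnn.
by rewrite dvdzE /= => /(dvdn_leq m_gt0); rewrite leqNgt m_lt.
Qed.
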